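(* Let $k$ be an infinite field and $n\geq 1$. Then the canonical homomorphism $\mathrm{BCr}_n(k)\to\mathrm{Sym}(\mathbb{P}^n(k))$ is injective.
   Context: $\mathrm{BCr}_n(k)$ is the group of birational self-maps $f$ of $\mathbb{P}^n$ over $k$ such that both $f$ and $f^{-1}$ are defined at every point of $\mathbb{P}^n(k)$; the canonical homomorphism sends $f$ to the permutation it induces on $\mathbb{P}^n(k)$. *)

From HB Require Import structures.
From mathcomp Require Import all_boot all_order all_algebra.
From mathcomp Require Import mpoly.
Set Implicit Arguments. Unset Strict Implicit. Unset Printing Implicit Defensive.
Import Order.TTheory GRing.Theory.
Local Open Scope ring_scope.

Definition infinite_field (k : fieldType) : Prop :=
  forall s : seq k, exists x : k, x \notin s.

(* k-points of P^n: nonzero vectors of k^(n+1), up to nonzero scaling. *)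
Definition kpoint (k : fieldType) (n : nat) (v : 'I_n.+1 -> k) : Prop :=
  exists i, v i != 0.

Definition same_kpoint (k : fieldType) (n : nat) (v w : 'I_n.+1 -> k) : Prop :=
  exists c : k, c != 0 /\ forall i, w i = c * v i.

(* A representative of a rational map P^n -/-> P^n: an (n+1)-tuple of
   homogeneous polynomials of a common degree, not all zero. *)
Definition ratmap (k : fieldType) (n : nat) := n.+1.-tuple {mpoly k[n.+1]}.

Definition is_rep (k : fieldType) (n : nat) (F : ratmap k n) : Prop :=
  (exists d : nat, forall i, tnth F i \is d.-homog) /\ exists i, tnth F i != 0.

(* Two representatives define the same rational map (proportional tuples). *)
Definition rat_equiv (k : fieldType) (n : nat) (F G : ratmap k n) : Prop :=
  forall i j, tnth F i * tnth G j = tnth F j * tnth G i.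

(* Composition g o f  (f = F applied first). *)
Definition rat_comp (k : fieldType) (n : nat) (G F : ratmap k n) : ratmap k n :=
  [tuple comp_mpoly F (tnth G i) | i < n.+1].

Definition rat_id (k : fieldType) (n : nat) : ratmap k n :=
  [tuple 'X_i | i < n.+1].

Definition rat_eval (k : fieldType) (n : nat) (F : ratmap k n) (v : 'I_n.+1 -> k)
  : 'I_n.+1 -> k := fun i => (tnth F i).@[v].

Definition defined_at (k : fieldType) (n : nat) (F : ratmap k n) (v : 'I_n.+1 -> k)
  : Prop := exists G : ratmap k n, rat_equiv F G /\ exists i, rat_eval G v i != 0.

Definition birat_inverse (k : fieldType) (n : nat) (F G : ratmap k n) : Prop :=
  [/\ is_rep G, is_rep (rat_comp G F), rat_equiv (rat_comp G F) (rat_id k n),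
      is_rep (rat_comp F G) & rat_equiv (rat_comp F G) (rat_id k n)].

Definition in_BCr (k : fieldType) (n : nat) (F : ratmap k n) : Prop :=
  is_rep F /\ exists G : ratmap k n, birat_inverse F G /\
    (forall v, kpoint v -> defined_at F v) /\ (forall v, kpoint v -> defined_at G v).

Definition induces (k : fieldType) (n : nat) (F : ratmap k n) (v w : 'I_n.+1 -> k)
  : Prop := exists G : ratmap k n, rat_equiv F G /\ kpoint (rat_eval G v) /\
     same_kpoint (rat_eval G v) w.

From HB Require Import structures.
From mathcomp Require Import all_boot all_order all_algebra.
From mathcomp Require Import mpoly.
From mathcomp Require Import ring.
Set Implicit Arguments. Unset Strict Implicit. Unset Printing Implicit Defensive.
Import Order.TTheory GRing.Theory.
Local Open Scope ring_scope.

(** If F1 and F2 induce the same permutation of P^n(k), then at every k-point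
    v where F1 is defined the vectors F1(v) and F2(v) are proportional, so the
    minors F1_i F2_j - F1_j F2_i vanish at every nonzero v in k^(n+1). Over an
    infinite field a polynomial vanishing off the origin is zero (multiply it
    by X_0 and induct on the number of variables), hence F1 and F2 are
    proportional. *)

Local Notation widen := (widen_ord (leqnSn _)).

Section MuniCoefficients.
Variables (N : nat) (R : nzRingType).

Lemma mnm_widen_max_eq (m m' : 'X_{1..N.+1}) :
  ([multinom m (widen i) | i < N] == [multinom m' (widen i) | i < N])
    && (m ord_max == m' ord_max) = (m == m').
Proof.
apply/idP/eqP => [/andP[/eqP m_m' /eqP max_m']|->]; last by rewrite !eqxx.
apply/mnmP => i; case: (unliftP ord_max i) => [j ->|->] //.
have -> : lift ord_max j = widen j.
  by apply/val_inj; rewrite /= /bump leqNgt ltn_ord.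
by move/mnmP: m_m' => /(_ j); rewrite !mnmE.
Qed.

Lemma mcoeff_muni (p : {mpoly R[N.+1]}) (m : 'X_{1..N.+1}) :
  ((muni p)`_(m ord_max))@_[multinom m (widen i) | i < N] = p@_m.
Proof.
rewrite muniE coef_sum raddf_sum [in RHS](mpolyE p) raddf_sum /=.
apply: eq_bigr => m' _; rewrite coefZ coefXn.
case: eqP => [max_eq|/eqP/negbTE max_neq].
- rewrite mulr1 !mcoeffZ !mcoeffX.
  by rewrite -mnm_widen_max_eq max_eq eqxx andbT.
- rewrite mulr0 mcoeff0 mcoeffZ mcoeffX.
  by rewrite -mnm_widen_max_eq [m' ord_max == _]eq_sym max_neq andbF mulr0.
Qed.

Lemma muni_eq0 (p : {mpoly R[N.+1]}) : (muni p == 0) = (p == 0).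
Proof.
apply/eqP/eqP => [p0|->]; last exact: muni0.
by apply/mpolyP => m; rewrite mcoeff0 -mcoeff_muni p0 coef0 mcoeff0.
Qed.

End MuniCoefficients.

Lemma meval_muni N (R : comNzRingType) (p : {mpoly R[N.+1]}) (v : 'I_N.+1 -> R) :
  p.@[v] = (map_poly (meval (fun i => v (widen i))) (muni p)).[v ord_max].
Proof.
rewrite muniE mevalE rmorph_sum horner_sum; apply: eq_bigr => m _.
rewrite big_ord_recr /= map_polyZ map_polyXn hornerZ hornerXn.
rewrite [X in _ = X * _]/= mevalZ mevalX mulrA.
by congr (_ * _ * _); apply: eq_bigr => i _; rewrite mnmE.
Qed.

Section VanishingPolynomials.
Variable R : idomainType.
Hypothesis R_infinite : forall s : seq R, exists x, x \notin s.

Lemma exists_uniq_seq n : exists s : seq R, uniq s /\ size s = n.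
Proof.
elim: n => [|n [s [s_uniq s_size]]]; first by exists [::].
have [x x_s] := R_infinite s.
by exists (x :: s); rewrite /= x_s s_uniq s_size.
Qed.

Lemma poly_vanishing_eq0 (q : {poly R}) : (forall x, q.[x] = 0) -> q = 0.
Proof.
move=> q_vanish; apply/eqP; apply: contraT => q_neq0.
have [s [s_uniq s_size]] := exists_uniq_seq (size q).
have s_roots : all (root q) s by apply/allP => x _; rewrite /root q_vanish.
by have := max_poly_roots q_neq0 s_roots s_uniq; rewrite s_size ltnn.
Qed.

Lemma mpoly_vanishing_eq0 N (p : {mpoly R[N]}) : (forall v, p.@[v] = 0) -> p = 0.
Proof.
elim: N p => [|N IHN] p p_vanish.
  have := p_vanish (fun _ => 0); rewrite {1}(nvar0_mpolyC p) mevalC => p0.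
  by rewrite (nvar0_mpolyC p) p0.
apply/eqP; rewrite -muni_eq0; apply/eqP/polyP => j; rewrite coef0.
apply: IHN => w; rewrite -coef_map.
suff -> : map_poly (meval w) (muni p) = 0 by rewrite coef0.
apply: poly_vanishing_eq0 => t.
pose v (i : 'I_N.+1) := oapp w t (insub (val i)).
have -> : t = v ord_max by rewrite /v insubF ?ltnn.
have -> : map_poly (meval w) (muni p) = map_poly (meval (fun i => v (widen i))) (muni p).
  by apply: eq_map_poly => q; apply: meval_eq => i; rewrite /v /= valK.
by rewrite -meval_muni.
Qed.

Lemma mpoly_vanishing_off0_eq0 N (p : {mpoly R[N.+1]}) :
  (forall v, (exists i, v i != 0) -> p.@[v] = 0) -> p = 0.
Proof.
move=> p_vanish.
have X0_neq0 : 'X_ord0 != 0 :> {mpoly R[N.+1]}.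
  apply/eqP => /(congr1 (mcoeff U_(ord0))).
  by rewrite mcoeffXU mcoeff0 eqxx; apply/eqP; exact: oner_neq0.
have : 'X_ord0 * p = 0.
  apply: mpoly_vanishing_eq0 => v; rewrite mevalM mevalXU.
  have [v0|v0_neq0] := eqVneq (v ord0) 0; first by rewrite v0 mul0r.
  by rewrite p_vanish ?mulr0 //; exists ord0.
by move/eqP; rewrite mulf_eq0 (negbTE X0_neq0) => /eqP.
Qed.

End VanishingPolynomials.

Section InducedMaps.
Variables (k : fieldType) (n : nat).
Implicit Types (F G : ratmap k n) (v : 'I_n.+1 -> k).

Lemma rat_equiv_eval_proportional F G v a :
  rat_equiv F G -> rat_eval G v a != 0 ->
  exists c, forall x, (tnth F x).@[v] = c * rat_eval G v x.
Proof.
move=> FG Ga; exists ((tnth F a).@[v] / rat_eval G v a) => x.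
have := congr1 (meval v) (FG x a); rewrite !mevalM => E.
by rewrite mulrAC -[_ * rat_eval G v x]E mulfK.
Qed.

Lemma same_image_minor_eval0 F1 F2 v i j :
  defined_at F1 v -> (forall w, induces F1 v w -> induces F2 v w) ->
  (tnth F1 i * tnth F2 j - tnth F1 j * tnth F2 i).@[v] = 0.
Proof.
move=> [G1 [F1G1 [a G1a]]] same_image.
have [G2 [F2G2 [_ [c [_ G1_G2]]]]] : induces F2 v (rat_eval G1 v).
  apply: same_image; exists G1; split=> //; split; first by exists a.
  by exists 1; split=> [|l]; rewrite ?oner_neq0 ?mul1r.
have G2a : rat_eval G2 v a != 0.
  by apply: contraNneq G1a; rewrite G1_G2 => ->; rewrite mulr0.
have [c1 F1_c1] := rat_equiv_eval_proportional F1G1 G1a.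
have [c2 F2_c2] := rat_equiv_eval_proportional F2G2 G2a.
rewrite mevalB !mevalM !F1_c1 !F2_c2 !G1_G2.
by apply/eqP; rewrite subr_eq0; apply/eqP; ring.
Qed.

End InducedMaps.

Theorem proposition4p19 (k : fieldType) (n : nat) :
  infinite_field k -> (1 <= n)%N ->
  forall F1 F2 : ratmap k n, in_BCr F1 -> in_BCr F2 ->
  (forall v : 'I_n.+1 -> k, kpoint v ->
     forall w : 'I_n.+1 -> k, induces F1 v w -> induces F2 v w) ->
  rat_equiv F1 F2.
Proof.
move=> k_infinite _ F1 F2 [_ [_ [_ [F1_defined _]]]] _ same_image i j.
apply/eqP; rewrite -subr_eq0; apply/eqP.
apply: (mpoly_vanishing_off0_eq0 k_infinite) => v v_point.
exact: same_image_minor_eval0 (F1_defined v v_point) (same_image v v_point).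
Qed.
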